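(* Let $(X,G)$ be a minimal continuous action and $m\in\mathbb{N}$, $m\geq 2$. If $(x_1,\dots,x_m)\in Q_m(X,G)$ and $U_1\times\cdots\times U_m$ is an open product neighborhood of $(x_1,\dots,x_m)$ in $X^m$, then $$\bigcap_{i=1}^m N(U_1,U_i)\neq\emptyset.$$
   Context: $G$ is a locally compact topological group acting continuously on a compact metric space $(X,d)$; minimal means every orbit is dense. A tuple $(x_1,\dots,x_m)\in X^m$ is $m$-regionally proximal if for each $\varepsilon>0$ there exist $x_1',\dots,x_m'\in X$ with $d(x_i,x_i')<\varepsilon$ for all $i$, and $g\in G$ with $d(gx_i',gx_j')<\varepsilon$ for all $i,j$; $Q_m(X,G)$ is the set of such tuples. For nonempty open $U,V\subset X$, $N(U,V)=\{g\in G: U\cap gV\neq\emptyset\}$. *)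

From HB Require Import structures.
From mathcomp Require Import all_boot all_order all_algebra.
From mathcomp Require Import all_classical all_reals all_analysis.
Set Implicit Arguments. Unset Strict Implicit. Unset Printing Implicit Defensive.
Import Order.TTheory GRing.Theory Num.Theory.
Local Open Scope classical_set_scope.
Local Open Scope ring_scope.

Definition lc_topological_group (G : topologicalType)
    (mul : G -> G -> G) (inv : G -> G) (e : G) : Prop :=
  (forall a b c, mul a (mul b c) = mul (mul a b) c) /\
  (forall a, mul e a = a /\ mul a e = a) /\
  (forall a, mul (inv a) a = e /\ mul a (inv a) = e) /\
  continuous (fun p : G * G => mul p.1 p.2) /\
  continuous inv /\
  (forall g : G, exists V : set G, nbhs g V /\ compact V).

Definition continuous_action (G X : topologicalType)
    (mul : G -> G -> G) (e : G) (act : G -> X -> X) : Prop :=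
  [/\ (forall x, act e x = x),
      (forall g h x, act (mul g h) x = act g (act h x)) &
      continuous (fun p : G * X => act p.1 p.2)].

Definition orbit (G X : Type) (act : G -> X -> X) (x : X) : set X :=
  [set act g x | g in [set: G]].

Definition minimal (G : Type) (X : topologicalType) (act : G -> X -> X) :=
  forall x : X, closure (orbit act x) = [set: X].

Definition Qm (R : realType) (G : Type) (X : metricType R)
    (act : G -> X -> X) (m : nat) : set ('I_m -> X) :=
  [set x | forall eps : R, 0 < eps ->
     exists x' : 'I_m -> X,
       (forall i, mdist (x i) (x' i) < eps) /\
       exists g : G, forall i j, mdist (act g (x' i)) (act g (x' j)) < eps].

Definition Nret (G X : Type) (act : G -> X -> X) (U V : set X) : set G :=
  [set g | U `&` (act g @` V) !=set0].

From Pilot Require Import Defs.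
From HB Require Import structures.
From mathcomp Require Import all_boot all_order all_algebra.
From mathcomp Require Import all_classical all_reals all_analysis.
Set Implicit Arguments. Unset Strict Implicit. Unset Printing Implicit Defensive.
Import Order.TTheory GRing.Theory Num.Theory.
Local Open Scope classical_set_scope.
Local Open Scope ring_scope.

(* By minimality every point is moved into the open set U_1 by some group
   element, and by compactness (a Lebesgue-number argument) there is a
   uniform d > 0 such that every d-ball is moved into U_1 by a single group
   element s.  Regional proximality then yields x'_i within d of x_i (so
   x'_i lies in U_i) and g such that all g x'_i lie within d of g x'_1; the
   element s g sends every x'_i into U_1, i.e. s g lies in every N(U_1, U_i). *)

Lemma nbhs_subball (R : numFieldType) (X : pseudoMetricType R) (x : X)
    (A : set X) :
  nbhs x A -> \forall d \near 0^'+, ball x d `<=` A.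
Proof.
move=> /nbhs_ballP [r r0 xrA].
apply: filterS (nbhs_right_lt r0) => d dr.
by apply: subset_trans xrA; exact/le_ball/ltW.
Qed.

Lemma minimal_orbit_meets_open (G : Type) (X : topologicalType)
    (act : G -> X -> X) (V : set X) :
  minimal act -> open V -> V !=set0 -> forall y, exists s, V (act s y).
Proof.
move=> hmin oV [v Vv] y.
have : closure (Defs.orbit act y) v by rewrite hmin.
move=> /(_ V (open_nbhs_nbhs (conj oV Vv))) [_ [[s _ <-] Vsy]].
by exists s.
Qed.

Lemma minimal_uniform_entry (R : numFieldType) (G : Type)
    (X : pseudoMetricType R) (act : G -> X -> X) (V : set X) :
  compact [set: X] -> minimal act -> (forall s, continuous (act s)) ->
  open V -> V !=set0 ->
  \forall d \near 0^'+, forall y, exists s, act s @` ball y d `<=` V.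
Proof.
move=> cX hmin cact oV V0.
suff : \forall d \near (0 : R)^'+,
    [set: X] `<=` (fun y => exists s, act s @` ball y d `<=` V).
  by apply: filterS => d dV y; exact: dV.
apply: (proj1 (compact_near_coveringP _) cX) => y _.
have [s Vsy] := minimal_orbit_meets_open hmin oV V0 y.
have /nbhs_ballP [r r0 yrV] : nbhs y (act s @^-1` V).
  by apply: cact; exact: open_nbhs_nbhs.
have r20 : 0 < r / 2 by rewrite divr_gt0.
exists (ball y (r / 2), [set d : R | d < r / 2]).
  by split; [exact: nbhsx_ballx | exact: nbhs_right_lt].
case=> y' d /= [yy' dr]; exists s => _ [z y'z <-]; apply: yrV.
rewrite (splitr r); apply: ball_triangle yy' _.
exact: le_ball (ltW dr) _ y'z.
Qed.

Lemma Qm_bigcap_Nret (R : realType) (G : Type) (X : metricType R)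
    (mul : G -> G -> G) (act : G -> X -> X) (m : nat) (x : 'I_m -> X)
    (U : 'I_m -> set X) (i0 : 'I_m) :
  compact [set: X] -> minimal act -> (forall s, continuous (act s)) ->
  (forall g h y, act (mul g h) y = act g (act h y)) ->
  Qm act x -> (forall i, open (U i)) -> (forall i, U i (x i)) ->
  \bigcap_(i in [set: 'I_m]) Nret act (U i0) (U i) !=set0.
Proof.
move=> cX hmin cact actM hx oU xU.
have entry_near :=
  minimal_uniform_entry cX hmin cact (oU i0) (ex_intro _ _ (xU i0)).
have xU_near : \forall d \near (0 : R)^'+, forall i, ball (x i) d `<=` U i.
  by apply: filter_forall => i; apply: nbhs_subball; exact: open_nbhs_nbhs.
have [d [[entry xdU] d0]] : exists d : R,
    ((forall y, exists s, act s @` ball y d `<=` U i0) /\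
     (forall i, ball (x i) d `<=` U i)) /\ 0 < d.
  apply: (@filter_ex _ (0 : R)^'+); apply: filterI; last exact: nbhs_right_gt.
  by apply: filterI; [exact: entry_near | exact: xU_near].
have [x' [xx' [g gx'd]]] := hx d d0.
have [s sU] := entry (act g (x' i0)).
exists (mul s g) => i _; exists (act (mul s g) (x' i)); split.
- rewrite actM; apply: sU; exists (act g (x' i)) => //.
  by rewrite ballEmdist; exact: gx'd.
- by exists (x' i) => //; apply: xdU; rewrite ballEmdist; exact: xx'.
Qed.

Theorem lemma5p4 (R : realType) (G : topologicalType) (X : metricType R)
    (mul : G -> G -> G) (inv : G -> G) (e : G) (act : G -> X -> X)
    (hG : lc_topological_group mul inv e)
    (hX : compact [set: X])
    (hact : continuous_action mul e act)
    (hmin : minimal act)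
    (m : nat) (hm : (2 <= m)%N)
    (x : 'I_m -> X) (hx : Qm act x)
    (U : 'I_m -> set X) (hUo : forall i, open (U i)) (hxU : forall i, U i (x i))
    (i1 : 'I_m) (hi1 : nat_of_ord i1 = 0%N) :
  \bigcap_(i in [set: 'I_m]) Nret act (U i1) (U i) !=set0.
Proof.
case: hact => _ actM cact.
apply: Qm_bigcap_Nret hx hUo hxU => //.
exact: (continuous_curry cact).2.
Qed.
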